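(* Let $n\ge 2$ and $D$ be positive integers, let $\Gamma$ be a finite alphabet, and let $B\in\Gamma^*$ have length $2\le|B|\le n$. Let $H:\Gamma^2\to\{0,1\}$ be chosen at random as a $(D,5\log_2 n)$-iterated pair-wise independent function, and let $(B_0,B_1,\dots,B_s)=\mathrm{Split}_H(B)$. Then with probability at least $1-1/n^3$, for all $j\in\{0,\dots,s\}$, $|\mathrm{Dict}(B_j)|\le 5D\log_2 n$.
   Context: For a string $z=z_1\cdots z_m$, $z[i,j]=z_i\cdots z_j$, $z[i,j)=z[i,j-1]$, and $\mathrm{Dict}(z)=\{z[i,i+1]: 1\le i\le m-1\}$ is the set of pairs of consecutive symbols occurring in $z$. $\mathrm{Split}_H(B)$: let $i_1<\dots<i_s$ be all $i\in\{2,\dots,|B|-1\}$ with $H(B[i,i+1])=0$ ($s=0$ if none), let $i_0=1$, $i_{s+1}=|B|+1$, and output $B_j=B[i_j,i_{j+1})$ for $j=0,\dots,s$. A $(D,\ell)$-iterated pair-wise independent function $H:\Gamma^2\to\{0,1\}$ is obtained by choosing independently $h_1,\dots,h_\ell:\Gamma^2\to\{0,\dots,\ell D-1\}$, each uniformly from a pair-wise independent hash family (for $u\ne u'$, $\Pr[h(u)=v\wedge h(u')=v']=1/|V|^2$), and setting $H(ab)=0$ iff $\prod_i h_i(ab)=0$. The quantity $5\log_2 n$ is treated as an integer. *)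

From mathcomp Require Import all_boot all_order all_algebra.
Set Implicit Arguments. Unset Strict Implicit. Unset Printing Implicit Defensive.

Definition DictZ (G : finType) (z : seq G) : {set G * G} :=
  [set p in zip z (behead z)].

(* Split_H(B).  0-based: pair number p is (B_p, B_{p+1}); the paper's cut
   positions i in {2..|B|-1} (1-based) are p in {1..|B|-2}, i.e. p <> 0 and
   p < size (zip B (behead B)) = |B|-1.  We cut B just before position p. *)
Definition split_cuts (G : finType) (H : G * G -> nat) (B : seq G) : seq nat :=
  [seq q.1 | q <- zip (iota 0 (size B).-1) (zip B (behead B))
           & (q.1 != 0) && (H q.2 == 0)].

Definition SplitH (G : finType) (H : G * G -> nat) (B : seq G) : seq (seq G) :=
  let bs := 0 :: rcons (split_cuts H B) (size B) in
  [seq take (q.2 - q.1) (drop q.1 B) | q <- zip bs (behead bs)].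

(* Pairwise independent family of hash functions T -> 'I_m, indexed by a
   finite (multi)set K, the choice being uniform over K:
   for u <> u', Pr[h u = v /\ h u' = v'] = 1/m^2. *)
Definition pairwise_indep (K T : finType) (m : nat) (fam : K -> T -> 'I_m) :=
  forall u u' : T, u != u' -> forall v v' : 'I_m,
    #|[set k | (fam k u == v) && (fam k u' == v')]| * m ^ 2 = #|K|.

Definition iterH (T : finType) (l m : nat) (hs : 'I_l -> T -> 'I_m) (ab : T) : nat :=
  if (\prod_(i < l) (hs i ab : nat))%N == 0%N then 0 else 1.

(* 5 log_2 n "treated as an integer": ceil(5 log_2 n), the least e with n^5 <= 2^e. *)
Definition five_log2 (n : nat) : nat := up_log 2 (n ^ 5).

From mathcomp Require Import all_boot all_order all_algebra.
From mathcomp Require Import zify.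
Import GRing.Theory Num.Theory.

Set Implicit Arguments.
Unset Strict Implicit.
Unset Printing Implicit Defensive.

(** Write m = ℓD for the range of each h_i and the bound on the dictionaries.
    If m distinct pairs are hashed by one pair-wise independent h, the number
    X of them sent to 0 has E[X] = 1 and E[X(X-1)] = (m-1)/m < 1, so the
    pointwise bound 2X <= 2[X > 0] + X(X-1) gives Pr[X = 0] <= 1/2.  Hence H
    cuts at none of these pairs with probability at most 2^-ℓ <= n^-5.  A
    block of Split_H(B) with more than m distinct pairs contains a window of
    consecutive pairs, free of cuts, with at least m distinct pairs; a union
    bound over the at most n^2 windows gives the failure probability n^-3. *)

Lemma card_bigcup_le (I T : finType) (P : pred I) (F : I -> {set T}) :
  #|\bigcup_(i | P i) F i| <= \sum_(i | P i) #|F i|.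
Proof.
apply: (big_ind2 (fun (A : {set T}) a => #|A| <= a)) => //; first by rewrite cards0.
by move=> A a C c leA leC; apply: leq_trans (leq_card_setU A C) (leq_add leA leC).
Qed.

Lemma sum_card_fibers (I J : finType) (A : {set I}) (f : I -> J) :
  \sum_j #|[set i in A | f i == j]| = #|A|.
Proof.
rewrite -sum1_card (partition_big f predT) //=; apply: eq_bigr => j _.
by rewrite -sum1_card; apply: eq_bigl => i; rewrite !inE.
Qed.

Lemma card_set_sum (J : finType) (A : {set J}) (P : pred J) :
  #|[set j in A | P j]| = \sum_(j in A) P j.
Proof.
rewrite -sum1_card (eq_bigl (fun j => (j \in A) && P j)) => [|j]; last by rewrite inE.
by rewrite big_mkcondr; apply: eq_bigr => j _; case: (P j).
Qed.

Lemma sum_nat_mem (I : finType) (B : {set I}) : \sum_i (i \in B) = #|B|.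
Proof. by rewrite -sum1_card [RHS]big_mkcond; apply: eq_bigr => i _; case: (i \in B). Qed.

Lemma sum_card_exchange (I J : finType) (A : {set J}) (R : I -> J -> bool) :
  \sum_i #|[set j in A | R i j]| = \sum_(j in A) #|[set i | R i j]|.
Proof.
under eq_bigr => i _ do rewrite card_set_sum.
rewrite exchange_big; apply: eq_bigr => j _.
by rewrite -sum1dep_card [RHS]big_mkcond; apply: eq_bigr => i _; case: (R i j).
Qed.

Lemma card_ordered_pairs (T : finType) (S Z : {set T}) : Z \subset S ->
  #|Z| * #|Z|.-1 = \sum_(u in S) #|[set u' in S :\ u | (u \in Z) && (u' \in Z)]|.
Proof.
move=> sub_ZS; have card_Z : #|Z| = \sum_(u in S) (u \in Z).
  by rewrite -card_set_sum; apply: eq_card => u; rewrite !inE andb_idl // => /(subsetP sub_ZS).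
rewrite {1}card_Z big_distrl /=; apply: eq_bigr => u _.
case: (boolP (u \in Z)) => Zu /=; last first.
  by rewrite mul0n; apply/esym/eq_card0 => u'; rewrite !inE andbF.
rewrite mul1n (cardsD1 u Z) Zu add1n /=; apply: eq_card => u'; rewrite !inE.
by case: (boolP (u' \in Z)) => [/(subsetP sub_ZS) ->|]; rewrite ?andbT ?andbF.
Qed.

Section PairwiseIndependentHash.

Variables (K T : finType) (m : nat) (fam : K -> T -> 'I_m).
Hypothesis fam_indep : pairwise_indep fam.

Lemma pairwise_indep_marginal u u' v :
  u != u' -> #|[set k | fam k u == v]| * m = #|K|.
Proof.
move=> neq_uu'; have m_gt0 : 0 < m by apply: leq_ltn_trans (ltn_ord v).
have joint : #|[set k | fam k u == v]| * m ^ 2 = m * #|K|.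
  rewrite -(sum_card_fibers _ (fun k => fam k u')) big_distrl /=.
  rewrite (eq_bigr (fun _ => #|K|)) ?sum_nat_const ?card_ord // => v' _.
  by rewrite -(fam_indep neq_uu' v v'); congr (_ * _); apply: eq_card => k; rewrite !inE.
by apply/eqP; rewrite -(eqn_pmul2l m_gt0) mulnCA mulnn joint.
Qed.

Variables (v : 'I_m) (S : {set T}).
Hypothesis S_gt1 : 1 < #|S|.

Let hits k := [set u in S | fam k u == v].

Lemma pairwise_indep_marginal_in u : u \in S -> #|[set k | fam k u == v]| * m = #|K|.
Proof.
move=> Su; have := S_gt1; rewrite (cardsD1 u S) Su add1n ltnS.
case/card_gt0P => u' /setD1P [neq_u'u _].
by apply: (@pairwise_indep_marginal u u'); rewrite eq_sym.
Qed.

Lemma sum_card_hits : (\sum_k #|hits k|) * m = #|S| * #|K|.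
Proof.
rewrite sum_card_exchange big_distrl -sum_nat_const.
by apply: eq_bigr => u /pairwise_indep_marginal_in.
Qed.

Lemma sum_card_hits_pairs :
  (\sum_k #|hits k| * (#|hits k|).-1) * m ^ 2 = #|S| * (#|S|).-1 * #|K|.
Proof.
have sub_hits k : hits k \subset S by apply/subsetP => u; rewrite inE => /andP [].
under eq_bigr => k _ do rewrite (card_ordered_pairs (sub_hits k)).
rewrite exchange_big big_distrl /= -mulnA -sum_nat_const; apply: eq_bigr => u Su.
rewrite sum_card_exchange big_distrl /= (cardsD1 u S) Su add1n /= -sum_nat_const.
apply: eq_bigr => u' /setD1P [neq_u'u Su']; have neq_uu' : u != u' by rewrite eq_sym.
by rewrite -(fam_indep neq_uu' v v); congr (_ * _); apply: eq_card => k; rewrite !inE Su Su'.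
Qed.

Lemma card_avoid_value_le_half :
  #|S| = m -> 2 * #|[set k | [forall u in S, fam k u != v]]| <= #|K|.
Proof.
move=> card_S; set A := [set k | _]; have m_gt0 : 0 < m by lia.
have hitsE k : (k \in A) = (#|hits k| == 0).
  rewrite inE cards_eq0; apply/forall_inP/eqP => [avoid | /setP no_hit u Su].
    by apply/setP => u; rewrite !inE; apply/andP => -[/avoid /negP].
  by move: (no_hit u); rewrite !inE Su /= => ->.
have first_moment : \sum_k #|hits k| = #|K|.
  by apply/eqP; rewrite -(eqn_pmul2r m_gt0) sum_card_hits card_S mulnC.
have second_moment : (\sum_k #|hits k| * (#|hits k|).-1) * m = m.-1 * #|K|.
  apply/eqP; rewrite -(eqn_pmul2r m_gt0) -mulnA mulnn sum_card_hits_pairs card_S.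
  by apply/eqP; nia.
have pointwise k : 2 * #|hits k| <= 2 * (k \in ~: A) + #|hits k| * (#|hits k|).-1.
  by rewrite inE hitsE; case: #|hits k| => [|[|h]] //=; nia.
have : \sum_k 2 * #|hits k| <= \sum_k (2 * (k \in ~: A) + #|hits k| * (#|hits k|).-1).
  by apply: leq_sum => k _; apply: pointwise.
rewrite -big_distrr big_split -big_distrr /= first_moment sum_nat_mem.
move=> /(leq_mul (leqnn m)); rewrite mulnDr [m * \sum_k _]mulnC second_moment => ineq.
have : m * #|K| <= m * (2 * #|~: A|) by move: ineq; case: m m_gt0 => // m' _; nia.
by rewrite leq_pmul2l // -(cardsC A); lia.
Qed.

End PairwiseIndependentHash.

Lemma iterH_neq0 (T : finType) (l m : nat) (hs : 'I_l -> T -> 'I_m) ab :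
  (iterH hs ab != 0) = [forall i, hs i ab != 0 :> nat].
Proof.
rewrite /iterH prod_nat_seq_eq0; case: hasP => [[i _ /eqP hi0] | no_zero] /=.
  by apply/esym/forallP => /(_ i); rewrite hi0.
by apply/esym/forallP => i; apply/negP => /eqP hi0; apply: no_zero; exists i; rewrite ?hi0.
Qed.

Lemma card_iterH_avoid (L : nat) (K T : finType) (m : nat) (fam : K -> T -> 'I_m)
    (S : {set T}) :
  #|[set ks : {ffun 'I_L -> K} | [forall u in S, iterH (fun i => fam (ks i)) u != 0]]|
  = #|[set k | [forall u in S, fam k u != 0 :> nat]]| ^ L.
Proof.
rewrite -[in RHS](card_ord L) -card_ffun_on; apply: eq_card => ks; rewrite inE.
apply/forall_inP/ffun_onP => [avoid i | avoid u Su]; last first.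
  by rewrite iterH_neq0; apply/forallP => i; have := avoid i; rewrite inE => /forall_inP->.
by rewrite inE; apply/forall_inP => u /avoid; rewrite iterH_neq0 => /forallP.
Qed.

Lemma card_iterH_avoid_le (L : nat) (K T : finType) (m : nat) (fam : K -> T -> 'I_m)
    (S : {set T}) :
  1 < m -> pairwise_indep fam -> m <= #|S| ->
  #|[set ks : {ffun 'I_L -> K} | [forall u in S, iterH (fun i => fam (ks i)) u != 0]]| * 2 ^ L
  <= #|K| ^ L.
Proof.
move=> m_gt1 fam_indep /card_geqP [s [uniq_s size_s sub_sS]].
pose S' := [set u in s]; have card_S' : #|S'| = m by rewrite cardsE (card_uniqP uniq_s) size_s.
have m_gt0 : 0 < m by lia.
apply: leq_trans (_ : #|[set ks : {ffun 'I_L -> K} |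
    [forall u in S', iterH (fun i => fam (ks i)) u != 0]]| * 2 ^ L <= _).
  rewrite leq_mul2r subset_leq_card ?orbT //; apply/subsetP => ks; rewrite !inE.
  by move/forall_inP => avoid; apply/forall_inP => u; rewrite inE => /sub_sS /avoid.
rewrite card_iterH_avoid -expnMn; case: L => // l; rewrite leq_exp2r // mulnC.
by apply: (card_avoid_value_le_half fam_indep (Ordinal m_gt0)); rewrite card_S'.
Qed.

Definition adj_pairs (T : Type) (s : seq T) : seq (T * T) := zip s (behead s).

Definition window (T : finType) (s : seq T) (b k : nat) : {set T} :=
  [set x in take k (drop b s)].

Lemma size_adj_pairs (T : Type) (s : seq T) : size (adj_pairs s) = (size s).-1.
Proof. by rewrite /adj_pairs size_zip size_behead minnE subKn // leq_pred. Qed.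

Lemma adj_pairs_drop (T : Type) (s : seq T) b :
  adj_pairs (drop b s) = drop b (adj_pairs s).
Proof.
elim: s b => [|x s IH] [|b] //; first by rewrite !drop0.
rewrite drop_cons IH.
by case: s {IH} => [|y s] //; rewrite drop_nil.
Qed.

Lemma adj_pairs_take (T : Type) (s : seq T) k :
  adj_pairs (take k s) = take k.-1 (adj_pairs s).
Proof.
elim: s k => [|x s IH] [|k] //; first by case: s {IH}.
case: s IH => [|y s] IH; first by case: k.
case: k IH => [|k] IH //.
by rewrite -[RHS]/((x, y) :: take k (adj_pairs (y :: s))) -(IH k.+1).
Qed.

Lemma DictZ_take_drop (G : finType) (s : seq G) b k :
  DictZ (take k (drop b s)) = window (adj_pairs s) b k.-1.
Proof. by rewrite /DictZ -/(adj_pairs _) adj_pairs_take adj_pairs_drop. Qed.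

Lemma behead_window (T : finType) (s : seq T) b k :
  [set x in behead (take k (drop b s))] = window s b.+1 k.-1.
Proof.
rewrite /window -add1n -drop_drop drop1.
by case: (drop b s) => [|x t]; case: k => [|k]; rewrite ?take0.
Qed.

Lemma card_set_behead (T : finType) (s : seq T) :
  #|[set x in s]| <= #|[set x in behead s]|.+1.
Proof. by case: s => [|x s]; rewrite ?set_cons ?cardsU1 //=; case: (_ \notin _). Qed.

Lemma mem_window (T : finType) (x0 : T) (s : seq T) b k u :
  u \in window s b k -> exists p, [/\ b <= p < b + k, p < size s & u = nth x0 s p].
Proof.
rewrite inE => /(nthP x0) [j]; rewrite size_take_min size_drop => lt_j <-.
have lt_bj : b + j < size s by move: lt_j; rewrite leq_min ltn_subRL => /andP [].
by exists (b + j); rewrite nth_take ?nth_drop; first split => //; lia.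
Qed.

Lemma mem_zip (S T : eqType) (s : seq S) (t : seq T) x y :
  (x, y) \in zip s t -> (x \in s) && (y \in t).
Proof.
elim: s t => [|x' s IH] [|y' t] //=; rewrite !inE => /orP [/eqP [-> ->] | /IH /andP [-> ->]].
  by rewrite !eqxx.
by rewrite !orbT.
Qed.

Lemma sorted_ltn_gap (s : seq nat) b b' p :
  sorted ltn s -> (b, b') \in adj_pairs s -> b < p < b' -> p \notin s.
Proof.
elim: s => [|x [|y t] IH] //= /andP [lt_xy path_yt].
have min_y : all (ltn y) t := order_path_min ltn_trans path_yt.
have notin_t q : q < y -> q \notin t by move=> lt_qy; apply/negP => /(allP min_y) /=; lia.
rewrite inE => /orP [/eqP [-> ->] /andP [lt_xp lt_py] | in_yt gap].
  by rewrite !inE (gtn_eqF lt_xp) (ltn_eqF lt_py) notin_t.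
have /andP [b_in _] := mem_zip in_yt; have notin_yt := IH path_yt in_yt gap.
rewrite inE negb_or notin_yt andbT; move: b_in gap; rewrite inE.
by case/orP => [/eqP -> | /(allP min_y) /= lt_yb] /andP [lt_bp _]; apply/eqP; lia.
Qed.

Definition split_points (G : finType) (H : G * G -> nat) (B : seq G) : seq nat :=
  0 :: rcons (split_cuts H B) (size B).

Lemma split_cutsE (G : finType) (H : G * G -> nat) (B : seq G) x0 :
  split_cuts H B =
  [seq p <- iota 0 (size (adj_pairs B)) | (p != 0) && (H (nth x0 (adj_pairs B) p) == 0)].
Proof.
rewrite /split_cuts -/(adj_pairs B) -size_adj_pairs; set P := adj_pairs B.
have -> : zip (iota 0 (size P)) P = [seq (p, nth x0 P p) | p <- iota 0 (size P)].
  by rewrite -(zip_map id) map_id -/(mkseq _ _) mkseq_nth.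
by rewrite filter_map -map_comp map_id.
Qed.

Lemma mem_split_cuts (G : finType) (H : G * G -> nat) (B : seq G) p :
  p \in split_cuts H B -> 0 < p < (size B).-1.
Proof.
case/mapP => -[q pq] /[swap] /= ->; rewrite mem_filter /= => /andP [/andP [q_neq0 _]].
by case/mem_zip/andP; rewrite mem_iota; lia.
Qed.

Lemma split_points_le (G : finType) (H : G * G -> nat) (B : seq G) p :
  p \in split_points H B -> p <= size B.
Proof. by rewrite inE mem_rcons inE => /or3P [/eqP -> | /eqP -> | /mem_split_cuts]; lia. Qed.

Lemma sorted_split_points (G : finType) (H : G * G -> nat) (B : seq G) :
  0 < size B -> sorted ltn (split_points H B).
Proof.
case: B => [//|b0 B'] _.
rewrite /= rcons_path (path_sortedE ltn_trans) -andbA; apply/and3P; split.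
- by apply/allP => p /mem_split_cuts /andP [].
- by rewrite (split_cutsE _ _ (b0, b0)) (sorted_filter ltn_trans) ?iota_ltn_sorted.
have := mem_last 0 (split_cuts H (b0 :: B')).
by rewrite inE => /orP [/eqP -> // | /mem_split_cuts /=]; lia.
Qed.

Lemma SplitH_uncut (G : finType) (H : G * G -> nat) (B : seq G) x0 b b' p :
  (b, b') \in adj_pairs (split_points H B) -> b < p < b' -> p < size (adj_pairs B) ->
  H (nth x0 (adj_pairs B) p) != 0.
Proof.
move=> block gap lt_p; have B_gt0 : 0 < size B by move: lt_p; rewrite size_adj_pairs; lia.
have := sorted_ltn_gap (sorted_split_points H B_gt0) block gap.
rewrite inE mem_rcons inE (split_cutsE _ _ x0) mem_filter mem_iota lt_p /=.
by rewrite !negb_or andbT => /and3P [p_neq0 _]; rewrite p_neq0.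
Qed.

Lemma SplitH_dense_window (G : finType) (H : G * G -> nat) (B : seq G) m :
  0 < m -> ~~ all (fun Bj => #|DictZ Bj| <= m) (SplitH H B) ->
  exists b k, [/\ b < size B, k < size B, m <= #|window (adj_pairs B) b k|
                & [forall u in window (adj_pairs B) b k, H u != 0]].
Proof.
move=> m_gt0 /allPn [_ /mapP [[b b'] block ->]]; rewrite -ltnNge /= DictZ_take_drop.
set P := adj_pairs B; set W := window P b.+1 (b' - b).-2 => dense.
have dense_W : m <= #|W|.
  have := card_set_behead (take (b' - b).-1 (drop b P)).
  by rewrite behead_window -/(window P b _) -/W -ltnS; apply: leq_trans dense.
have uncut u : u \in W -> exists2 p, b < p < b' & p < size P /\ H u != 0.
  case/(mem_window u) => p [range lt_p ->]; have gap : b < p < b' by lia.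
  by exists p => //; split => //; apply: SplitH_uncut block gap lt_p.
have [u0 /uncut [p /andP [lt_bp _] [lt_p _]]] : exists u, u \in W.
  by apply/card_gt0P; lia.
have /andP [_ /mem_behead /split_points_le le_b'B] := mem_zip block.
rewrite size_adj_pairs in lt_p; exists b.+1, (b' - b).-2; split => //; try lia.
by apply/forall_inP => u /uncut [? _ []].
Qed.

Lemma card_SplitH_dense_le (G K : finType) (L m : nat) (fam : K -> G * G -> 'I_m)
    (B : seq G) :
  1 < m -> pairwise_indep fam ->
  #|~: [set ks : {ffun 'I_L -> K} |
        all (fun Bj => #|DictZ Bj| <= m) (SplitH (iterH (fun i => fam (ks i))) B)]| * 2 ^ L
  <= size B ^ 2 * #|K| ^ L.
Proof.
move=> m_gt1 fam_indep.
pose W (bk : 'I_(size B) * 'I_(size B)) := window (adj_pairs B) bk.1 bk.2.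
pose avoid (S : {set G * G}) := [set ks : {ffun 'I_L -> K} |
  [forall u in S, iterH (fun i => fam (ks i)) u != 0]].
set Good := [set ks | _].
have cover : ~: Good \subset \bigcup_(bk | m <= #|W bk|) avoid (W bk).
  apply/subsetP => ks; rewrite !inE => /(SplitH_dense_window (ltnW m_gt1)).
  case=> b [k [lt_b lt_k dense uncut]]; apply/bigcupP.
  by exists (Ordinal lt_b, Ordinal lt_k) => //; rewrite inE.
apply: leq_trans (leq_mul (subset_leq_card cover) (leqnn _)) _.
apply: leq_trans (leq_mul (card_bigcup_le _ _) (leqnn _)) _.
rewrite big_distrl /=; apply: leq_trans (_ : \sum_(bk | m <= #|W bk|) #|K| ^ L <= _).
  by apply: leq_sum => bk dense; apply: card_iterH_avoid_le.
rewrite sum_nat_cond_const leq_mul2r; apply/orP; right.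
by apply: leq_trans (max_card _) _; rewrite card_prod card_ord mulnn.
Qed.

Lemma ratio_ge_one_sub_inv (a N c : nat) : 0 < N -> 0 < c -> a * c <= N ->
  (1 - 1 / c%:R <= (N - a)%:R / N%:R :> rat)%R.
Proof.
move=> N_gt0 c_gt0 le_acN.
have c_pos : (0 < c%:R :> rat)%R by rewrite ltr0n.
have N_pos : (0 < N%:R :> rat)%R by rewrite ltr0n.
have le_aN : (a%:R <= N%:R / c%:R :> rat)%R by rewrite ler_pdivlMr // -natrM ler_nat.
rewrite ler_pdivlMr // natrB; last by apply: leq_trans le_acN; rewrite leq_pmulr.
by rewrite mulrBl !mul1r mulrC lerD2l lerN2.
Qed.

Theorem lemma2 (n D : nat) (G : finType) (B : seq G)
  (K : finType) (fam : K -> G * G -> 'I_(five_log2 n * D)) :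
  (2 <= n)%N -> (0 < D)%N -> (2 <= size B <= n)%N ->
  (0 < #|K|)%N -> pairwise_indep fam ->
  ((#|[set ks : {ffun 'I_(five_log2 n) -> K} |
        all (fun Bj => #|DictZ Bj| <= five_log2 n * D)%N
            (SplitH (iterH (fun i => fam (ks i))) B)]|%:R
     / (#|K| ^ five_log2 n)%:R : rat)
   >= 1 - 1 / (n ^ 3)%:R)%R.
Proof.
move=> n_ge2 D_gt0 /andP [_ B_le_n] K_gt0 fam_indep.
set L := five_log2 n; set Good := [set ks | _].
have pow_L : n ^ 5 <= 2 ^ L := up_logP _ (ltnSn 1).
have L_ge5 : 5 <= L.
  by rewrite -(leq_exp2l _ _ (ltnSn 1)); apply: leq_trans pow_L; rewrite leq_exp2r.
have m_gt1 : 1 < L * D by nia.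
have bad := card_SplitH_dense_le L B m_gt1 fam_indep.
have bad_n3 : #|~: Good| * n ^ 3 <= #|K| ^ L.
  have : #|~: Good| * n ^ 5 <= n ^ 2 * #|K| ^ L.
    apply: leq_trans (leq_mul (leqnn _) pow_L) (leq_trans bad _).
    by rewrite leq_mul2r leq_exp2r ?B_le_n ?orbT.
  by rewrite (_ : 5 = 2 + 3) // expnD mulnCA leq_pmul2l // expn_gt0; lia.
have card_Good : #|Good| = #|K| ^ L - #|~: Good|.
  by rewrite -{1}(addnK #|~: Good| #|Good|) cardsC card_ffun card_ord.
rewrite card_Good; apply: ratio_ge_one_sub_inv => //; rewrite expn_gt0 ?K_gt0 //; lia.
Qed.
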